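(* Let $k$ be a field of characteristic different from $2$, and let $(S,E)$ and $(S',E')$ be finite simple graphs. If the Lie algebras $\mathfrak{n}(S,E)$ and $\mathfrak{n}(S',E')$ over $k$ are isomorphic as Lie algebras, then the graphs $(S,E)$ and $(S',E')$ are isomorphic.
   Context: A finite simple graph $(S,E)$ has finite vertex set $S$ and edge set $E$ consisting of unordered pairs $\alpha\beta$ of distinct vertices (no loops, no multiple edges). Given such a graph and a field $k$ with $\mathrm{char}(k)\neq 2$, let $V$ be the $k$-vector space with basis $S$, and let $W\subseteq \bigwedge^2 V$ be the subspace spanned by all $\alpha\wedge\beta$ with $\alpha,\beta\in S$, $\alpha\neq\beta$ and $\alpha\beta\notin E$. The Lie algebra $\mathfrak{n}(S,E)$ is the vector space $V\oplus (\bigwedge^2V)/W$ with bracket determined by $[v_1,v_2]=v_1\wedge v_2 \bmod W$ for $v_1,v_2\in V$ and $[x,y]=0$ for $x\in\mathfrak{n}(S,E)$, $y\in(\bigwedge^2V)/W$ (extended bilinearly and skew-symmetrically). It has dimension $|S|+|E|$. *)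

From HB Require Import structures.
From mathcomp Require Import all_boot all_order all_algebra.
Set Implicit Arguments. Unset Strict Implicit. Unset Printing Implicit Defensive.
Import Order.TTheory GRing.Theory.
Local Open Scope ring_scope.

Definition simple_graph (S : finType) (e : rel S) : Prop :=
  irreflexive e /\ symmetric e.

Definition graph_iso (S S' : finType) (e : rel S) (e' : rel S') : Prop :=
  exists sigma : S -> S', bijective sigma /\ forall a b, e' (sigma a) (sigma b) = e a b.

(* Ambient k-vector space  V x (k^(S x S)),  V = k^S with basis S.
   Lambda^2 V is identified with skew-symmetric S x S arrays
   (alpha /\ beta  <->  E_{alpha beta} - E_{beta alpha}), and the quotient
   (Lambda^2 V)/W, W = span{alpha /\ beta | alpha beta not in E}, is identified
   with the complement of W: skew arrays supported on edges. *)
Definition namb (k : fieldType) (S : finType) : lmodType k :=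
  ({ffun S -> k^o} * {ffun (S * S)%type -> k^o})%type.

(* The subspace of the ambient space realizing n(S,E) = V (+) (Lambda^2 V)/W. *)
Definition in_n (k : fieldType) (S : finType) (e : rel S) (x : namb k S) : Prop :=
  forall a b, x.2 (a, b) = - x.2 (b, a) /\ (~~ e a b -> x.2 (a, b) = 0).

(* The Lie bracket: [x, y] = x_V /\ y_V mod W (the (Lambda^2 V)/W components
   are central). *)
Definition nbr (k : fieldType) (S : finType) (e : rel S) (x y : namb k S) : namb k S :=
  (0, [ffun p : S * S => if e p.1 p.2 then x.1 p.1 * y.1 p.2 - x.1 p.2 * y.1 p.1
                         else 0]).

Definition n_lie_iso (k : fieldType) (S S' : finType) (e : rel S) (e' : rel S') : Prop :=
  exists f : {linear namb k S -> namb k S'},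
    [/\ forall x, in_n e x -> in_n e' (f x),
        forall x y, in_n e x -> in_n e y -> f x = f y -> x = y,
        forall y, in_n e' y -> exists2 x, in_n e x & f x = y
      & forall x y, in_n e x -> in_n e y -> f (nbr e x y) = nbr e' (f x) (f y)].

From HB Require Import structures.
From mathcomp Require Import all_boot all_order all_algebra all_fingroup ring.
Set Implicit Arguments. Unset Strict Implicit. Unset Printing Implicit Defensive.
Import GRing.Theory.
Local Open Scope ring_scope.

(* The V-component of an isomorphism f is a linear bijection phi : k^S -> k^S'.
   Surjectivity holds because, 2 being invertible, the centre (Lambda^2 V)/W is
   spanned by brackets, which f maps into the centre; injectivity because an
   element of V sent into the centre would be congruent to a combination of
   brackets.
   For x in V, the dimension of [x, V] is preserved by phi; it is at most the
   degree of a when x is the basis vector a, and at least the degree of every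
   vertex in the support of x.  A nonzero term of det phi gives a bijection s
   with g in the support of phi (s g), the same argument for phi^-1 gives the
   reverse inequalities, and double counting forces deg g = deg (s g).
   Finally, if g ~ d while s g, s d are not adjacent, then [phi (s g), phi (s d)]
   = 0, and a suitable combination z = phi (s d) - lam phi (s g) vanishes on the
   closed neighbourhood of g, and every neighbour of its support lies in
   N(g) \ {d}; hence
   deg (s g) <= dim [s d - lam s g, V] = dim [z, V] <= deg g - 1, a contradiction. *)

Lemma leq_card_free (k : fieldType) (W : vectType k) (I : finType) (P : {set I})
    (X : I -> W) (U : {vspace W}) :
  (forall c : I -> k, \sum_(i in P) c i *: X i = 0 -> forall i, i \in P -> c i = 0) ->
  (forall i, i \in P -> X i \in U) ->
  (#|P| <= \dim U)%N.
Proof.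
move=> Xfree XU; pose Xt := [tuple X (enum_val i) | i < #|P|].
have /eqP dimXt : free Xt.
  apply/freeP=> kk kk0 i; pose c x := kk (enum_rank_in (enum_valP i) x).
  have /Xfree/(_ _ (enum_valP i)) : \sum_(x in P) c x *: X x = 0.
    rewrite big_enum_val -[RHS]kk0; apply: eq_bigr => j _.
    by rewrite /c enum_valK_in nth_mktuple.
  by rewrite /c enum_valK_in.
rewrite -[#|P|](size_tuple Xt) -dimXt; apply/dimvS/span_subvP => _ /mapP[j _ ->].
exact/XU/enum_valP.
Qed.

Section Coordinates.
Variables (k : fieldType) (T : finType).

Definition delta (a : T) : {ffun T -> k^o} := [ffun x => (x == a)%:R].

Lemma deltaE a x : delta a x = (x == a)%:R.
Proof. by rewrite ffunE. Qed.

Lemma sum_delta_in (P : {pred T}) (c : T -> k) x :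
  (\sum_(a in P) c a *: delta a) x = if x \in P then c x else 0.
Proof.
rewrite sum_ffunE; case: ifP => xP.
  rewrite (bigD1 x) //= big1 => [|a /andP[_ ax]]; rewrite ffunE deltaE.
    by rewrite eqxx mulr1n [_ *: _]mulr1 addr0.
  by rewrite eq_sym (negPf ax) [_ *: _]mulr0.
apply: big1 => a aP; rewrite ffunE deltaE.
have /negPf-> : x != a by apply: contraFN xP => /eqP->.
by rewrite [_ *: _]mulr0.
Qed.

Lemma ffun_delta_expand (v : {ffun T -> k^o}) : v = \sum_a v a *: delta a.
Proof. by apply/ffunP=> x; rewrite sum_delta_in. Qed.

End Coordinates.

Arguments delta {k T} a.

Lemma leq_card_linear_inj (k : fieldType) (T T' : finType)
    (L : {linear {ffun T -> k^o} -> {ffun T' -> k^o}}) :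
  injective L -> (#|T| <= #|T'|)%N.
Proof.
move=> L_inj; rewrite -cardsT.
pose U := <<[seq delta g | g <- enum T']>>%VS : {vspace {ffun T' -> k^o}}.
have : (\dim U <= #|T'|)%N by rewrite (leq_trans (dim_span _)) // size_map cardE.
apply: leq_trans; apply: (leq_card_free (X := fun a => L (delta a))) => [c c0 a _ | a _].
  have : \sum_(b in [set: T]) c b *: delta b = 0.
    apply: L_inj; rewrite linear_sum linear0 -[RHS]c0.
    by apply: eq_bigr => b _; rewrite linearZ.
  by move/(congr1 (fun v : {ffun T -> k^o} => v a)); rewrite sum_delta_in inE ffunE.
rewrite [L _]ffun_delta_expand; apply: memv_suml => g _.
by apply/memvZ/memv_span/map_f; rewrite mem_enum.
Qed.

Lemma linear_surj_transversal (k : fieldType) (T T' : finType)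
    (L : {linear {ffun T -> k^o} -> {ffun T' -> k^o}}) :
  #|T| = #|T'| -> (forall w, exists v, L v = w) ->
  exists s : T' -> T, injective s /\ forall g, L (delta (s g)) g != 0.
Proof.
move=> card_eq L_surj; pose n := #|T'|.
pose col (j : 'I_n) : T := enum_val (cast_ord (esym card_eq) j).
pose A : 'M[k]_n := \matrix_(i, j) L (delta (col j)) (enum_val i).
have L_coord x g : L x g = \sum_a x a * L (delta a) g.
  rewrite {1}[x]ffun_delta_expand linear_sum sum_ffunE.
  by apply: eq_bigr => a _; rewrite linearZ ffunE.
have detA : \det A != 0.
  apply/negP => /det0P[v v_neq0 vA].
  have [i0 vi0] : exists i0, v 0 i0 != 0.
    apply/existsP; apply: contraR v_neq0 => /existsPn v0; apply/eqP/rowP => i.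
    by rewrite mxE; apply/eqP/negPn/v0.
  have [x Lx] := L_surj (delta (enum_val i0)).
  suff : \sum_i v 0 i * L x (enum_val i) = 0.
    rewrite Lx (bigD1 i0) //= big1 => [|i i_i0]; rewrite deltaE ?(inj_eq enum_val_inj).
      by rewrite eqxx mulr1 addr0; apply/eqP.
    by rewrite (negPf i_i0) mulr0.
  under eq_bigr do rewrite L_coord big_distrr /=.
  rewrite exchange_big /= big1 // => a _.
  have col_a : col (cast_ord card_eq (enum_rank a)) = a by rewrite /col cast_ordK enum_rankK.
  transitivity (x a * (v *m A) 0 (cast_ord card_eq (enum_rank a))).
    by rewrite mxE big_distrr /=; apply: eq_bigr => i _; rewrite mxE col_a mulrCA.
  by rewrite vA mxE mulr0.
have [p Ap] : exists p : 'S_n, \prod_i A i (p i) != 0.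
  apply/existsP; apply: contraR detA => /existsPn Ap0.
  by rewrite /determinant big1 // => p _; rewrite (eqP (negbNE (Ap0 p))) mulr0.
exists (fun g => col (p (enum_rank g))); split.
  by move=> g1 g2 /enum_val_inj/cast_ord_inj/perm_inj/enum_rank_inj.
by move=> g; move/prodf_neq0: Ap => /(_ (enum_rank g) isT); rewrite mxE enum_rankK.
Qed.

Definition degree (T : finType) (r : rel T) (a : T) : nat := #|[set b | r a b]|.

Lemma eq_of_leq_bij (I J : finType) (F : I -> nat) (G : J -> nat)
    (s : J -> I) (t : I -> J) :
  bijective s -> bijective t ->
  (forall j, G j <= F (s j))%N -> (forall i, F i <= G (t i))%N ->
  forall j, G j = F (s j).
Proof.
move=> s_bij t_bij GF FG.
have sum_eq : (\sum_j G j = \sum_j F (s j))%N.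
  apply/eqP; rewrite eqn_leq (leq_sum _ (fun j _ => GF j)).
  apply: (@leq_trans (\sum_i F i)); first by rewrite (reindex s (onW_bij _ s_bij)).
  by rewrite [X in (_ <= X)%N](reindex t (onW_bij _ t_bij)) leq_sum.
have [_] := leqif_sum (fun j (_ : predT j) => leqif_eq (GF j)).
by rewrite sum_eq eqxx => /esym/forallP GFj j; apply/eqP/(implyP (GFj j)).
Qed.

Lemma hom_degree_reflect (T T' : finType) (r : rel T) (r' : rel T') (s : T' -> T) :
  injective s -> (forall g d, r' g d -> r (s g) (s d)) ->
  (forall g, degree r' g = degree r (s g)) -> forall g d, r (s g) (s d) = r' g d.
Proof.
move=> s_inj s_hom s_deg g d; apply/idP/idP; last exact: s_hom.
have nbhd : s @: [set x | r' g x] = [set y | r (s g) y].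
  apply/eqP; rewrite eqEcard card_imset // -[#|[set y | _]|]/(degree r (s g)) -s_deg.
  rewrite leqnn andbT; apply/subsetP=> y /imsetP[x]; rewrite inE => gx ->.
  by rewrite inE; apply: s_hom.
move=> sgd; have : s d \in s @: [set x | r' g x] by rewrite nbhd inE.
by case/imsetP=> x; rewrite inE => gx /s_inj->.
Qed.

Section Wedge.
Variables (k : fieldType) (T : finType) (r : rel T).
Hypotheses (r_irr : irreflexive r) (r_sym : symmetric r).
Implicit Types x y : {ffun T -> k^o}.

(* [nbr r x y] is [(0, wedge r x.1 y.1)] by conversion. *)
Definition wedge (x y : {ffun T -> k^o}) : {ffun (T * T)%type -> k^o} :=
  [ffun p => if r p.1 p.2 then x p.1 * y p.2 - x p.2 * y p.1 else 0].

Lemma wedgeE x y p q :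
  wedge x y (p, q) = if r p q then x p * y q - x q * y p else 0.
Proof. by rewrite ffunE. Qed.

Fact wedge_is_linear x : linear (wedge x).
Proof.
move=> a y z; apply/ffunP=> -[p q]; rewrite !ffunE /=.
case: (r p q); last by rewrite [_ *: _]mulr0 addr0.
change (x p * (a * y q + z q) - x q * (a * y p + z p)
        = a * (x p * y q - x q * y p) + (x p * z q - x q * z p)).
ring.
Qed.

HB.instance Definition _ x := GRing.isLinear.Build k _ _ _ (wedge x) (wedge_is_linear x).

Lemma wedge_eq0_cross y z p q : wedge y z = 0 -> r p q -> y p * z q = y q * z p.
Proof.
move=> /(congr1 (fun w : {ffun (T * T)%type -> k^o} => w (p, q))); rewrite wedgeE ffunE => + pq.
by rewrite pq => /eqP; rewrite subr_eq0 => /eqP.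
Qed.

Lemma wedge_delta_eq0 x b : (forall p, r p b -> x p = 0) -> wedge x (delta b) = 0.
Proof.
move=> xb; apply/ffunP=> -[p q]; rewrite wedgeE !deltaE ffunE.
case: ifP => // pq.
have -> : x p * (q == b)%:R = 0.
  by case: eqP => [qb | _]; rewrite ?mulr0 // xb ?mul0r // -qb.
have -> : x q * (p == b)%:R = 0.
  by case: eqP => [pb | _]; rewrite ?mulr0 // xb ?mul0r // -pb r_sym.
by rewrite subrr.
Qed.

Lemma wedge_lincomb_deltaE x (P : {pred T}) (c : T -> k) p q :
  (\sum_(b in P) c b *: wedge x (delta b)) (p, q)
  = if r p q
    then x p * (if q \in P then c q else 0) - x q * (if p \in P then c p else 0)
    else 0.
Proof.
have -> : \sum_(b in P) c b *: wedge x (delta b) = wedge x (\sum_(b in P) c b *: delta b).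
  by rewrite linear_sum; apply: eq_bigr => b _; rewrite linearZ.
by rewrite wedgeE !sum_delta_in.
Qed.

(* [in_n r x] is [skew_on r x.2] by conversion. *)
Definition skew_on (z : {ffun (T * T)%type -> k^o}) : Prop :=
  forall p q, z (p, q) = - z (q, p) /\ (~~ r p q -> z (p, q) = 0).

Lemma skew_on0 : skew_on 0.
Proof. by move=> p q; rewrite !ffunE oppr0. Qed.

Lemma skew_on_wedge x y : skew_on (wedge x y).
Proof.
move=> p q; rewrite !wedgeE (r_sym q p); split; last by move/negPf->.
by case: (r p q); rewrite ?oppr0 ?opprB.
Qed.

Lemma skew_on_lincomb (I : finType) (c : I -> k)
    (z : I -> {ffun (T * T)%type -> k^o}) :
  (forall i, skew_on (z i)) -> skew_on (\sum_i c i *: z i).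
Proof.
move=> zs; elim/big_rec: _ => [|i w _ ws]; first exact: skew_on0.
move=> p q; rewrite !ffunE; have [zi1 zi2] := zs i p q; have [w1 w2] := ws p q.
split; first by rewrite zi1 w1 scalerN opprD.
by move=> pq; rewrite zi2 // w2 // scaler0 addr0.
Qed.

Lemma skew_on_wedge_expand z : 2%:R != 0 :> k -> skew_on z ->
  z = \sum_(pq : T * T) (z pq / 2%:R) *: wedge (delta pq.1) (delta pq.2).
Proof.
move=> two_neq0 zs; apply/ffunP=> -[p q]; rewrite sum_ffunE.
have [z_skew z_edge] := zs p q.
case: (boolP (r p q)) => pq; last first.
  by rewrite z_edge // big1 // => -[a b] _; rewrite ffunE wedgeE (negPf pq) [_ *: _]mulr0.
pose c (ab : T * T) := z ab / 2%:R.
transitivity ((\sum_ab c ab *: delta ab) (p, q) - (\sum_ab c ab *: delta ab) (q, p)).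
  by rewrite !sum_delta_in /c z_skew /=; field.
rewrite [X in X - _]sum_ffunE [X in _ - X]sum_ffunE -sumrB; apply: eq_bigr => -[a b] _.
by rewrite !ffunE /= pq !xpair_eqE -!natrM !mulnb scalerBr.
Qed.

(* [ad_rank x] is the dimension of [x, V] in n(T, r). *)
Definition ad_image x := limg (linfun (wedge x)).

Definition ad_rank x := \dim (ad_image x).

Lemma memv_ad_image x y : wedge x y \in ad_image x.
Proof. by rewrite -lfunE memv_img ?memvf. Qed.

Lemma ad_rank_le_card (Q : {set T}) x :
  (forall b, b \notin Q -> wedge x (delta b) = 0) -> (ad_rank x <= #|Q|)%N.
Proof.
move=> xQ; pose U := <<[seq wedge x (delta b) | b <- enum Q]>>%VS.
have : (\dim U <= #|Q|)%N by rewrite (leq_trans (dim_span _)) // size_map cardE.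
apply/leq_trans/dimvS/subvP=> _ /memv_imgP[v _ ->].
rewrite lfunE /= [v]ffun_delta_expand linear_sum; apply: memv_suml => b _.
rewrite linearZ /=; case: (boolP (b \in Q)) => [bQ | /xQ->]; last by rewrite scaler0 mem0v.
by apply/memvZ/memv_span/map_f; rewrite mem_enum.
Qed.

Lemma ad_rank_delta a : (ad_rank (delta a) <= degree r a)%N.
Proof.
apply: ad_rank_le_card => b; rewrite inE => ab.
apply: wedge_delta_eq0 => p pb; rewrite deltaE.
by case: eqP => // pa; rewrite -pa pb in ab.
Qed.

Lemma degree_le_ad_rank x g : x g != 0 -> (degree r g <= ad_rank x)%N.
Proof.
move=> xg; apply: (leq_card_free (X := fun b => wedge x (delta b))) => [c c0 b | b _].
  rewrite inE => gb; move/(congr1 (fun w : {ffun (T * T)%type -> k^o} => w (g, b))): c0.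
  rewrite wedge_lincomb_deltaE ffunE !inE gb r_irr mulr0 subr0 => /eqP.
  by rewrite mulf_eq0 (negPf xg) => /eqP.
exact: memv_ad_image.
Qed.

Lemma degree_lt_ad_rank x g rho eps : x g != 0 -> x rho != 0 ->
  eps != g -> ~~ r g eps -> r rho eps -> (degree r g < ad_rank x)%N.
Proof.
move=> xg xrho eps_g g_eps rho_eps.
have <- : #|eps |: [set b | r g b]| = (degree r g).+1 by rewrite cardsU1 inE g_eps.
apply: (leq_card_free (X := fun b => wedge x (delta b))) => [c c0 | b _]; last first.
  exact: memv_ad_image.
have c_nbhd b : r g b -> c b = 0.
  move=> gb; move/(congr1 (fun w : {ffun (T * T)%type -> k^o} => w (g, b))): c0.
  rewrite wedge_lincomb_deltaE ffunE !inE gb orbT r_irr orbF eq_sym (negPf eps_g).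
  by rewrite mulr0 subr0 => /eqP; rewrite mulf_eq0 (negPf xg) => /eqP.
move=> b; rewrite !inE => /orP[/eqP-> | /c_nbhd //].
move/(congr1 (fun w : {ffun (T * T)%type -> k^o} => w (rho, eps))): c0.
rewrite wedge_lincomb_deltaE ffunE rho_eps !inE eqxx.
have -> : (if (rho == eps) || r g rho then c rho else 0) = 0.
  case: ifP => // /orP[/eqP rho_eq | /c_nbhd //].
  by rewrite rho_eq r_irr in rho_eps.
by rewrite mulr0 subr0 => /eqP; rewrite mulf_eq0 (negPf xrho) => /eqP.
Qed.

End Wedge.

Section Ambient.
Variables (k : fieldType) (T : finType).

Definition vpart (v : {ffun T -> k^o}) : namb k T := (v, 0).
Definition zpart (z : {ffun (T * T)%type -> k^o}) : namb k T := (0, z).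

Fact vpart_is_linear : linear vpart.
Proof. by move=> a v w; apply: injective_projections; rewrite /= ?scaler0 ?addr0. Qed.
Fact zpart_is_linear : linear zpart.
Proof. by move=> a v w; apply: injective_projections; rewrite /= ?scaler0 ?addr0. Qed.

HB.instance Definition _ := GRing.isLinear.Build k _ _ _ vpart vpart_is_linear.
HB.instance Definition _ := GRing.isLinear.Build k _ _ _ zpart zpart_is_linear.

Lemma in_n_vpart (r : rel T) (v : {ffun T -> k^o}) : in_n r (v, 0).
Proof. exact: skew_on0. Qed.

End Ambient.

Section LieIsomorphism.
Variables (k : fieldType) (S S' : finType) (e : rel S) (e' : rel S').
Hypotheses (e_irr : irreflexive e) (e_sym : symmetric e).
Hypotheses (e'_irr : irreflexive e') (e'_sym : symmetric e').
Hypothesis two_neq0 : 2%:R != 0 :> k.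
Variable f : {linear namb k S -> namb k S'}.
Hypothesis f_n : forall x, in_n e x -> in_n e' (f x).
Hypothesis f_inj : forall x y, in_n e x -> in_n e y -> f x = f y -> x = y.
Hypothesis f_surj : forall y, in_n e' y -> exists2 x, in_n e x & f x = y.
Hypothesis f_br : forall x y, in_n e x -> in_n e y -> f (nbr e x y) = nbr e' (f x) (f y).


Definition phi (v : {ffun S -> k^o}) : {ffun S' -> k^o} := (f (v, 0)).1.
Definition chi (z : {ffun (S * S)%type -> k^o}) : {ffun S' -> k^o} := (f (0, z)).1.
Definition psi (z : {ffun (S * S)%type -> k^o}) : {ffun (S' * S')%type -> k^o} :=
  (f (0, z)).2.

Fact phi_is_linear : linear phi.
Proof. by move=> a v w; rewrite /phi -[(_, 0)]/(vpart _) !linearP. Qed.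
Fact chi_is_linear : linear chi.
Proof. by move=> a v w; rewrite /chi -[(0, _)]/(zpart _) !linearP. Qed.
Fact psi_is_linear : linear psi.
Proof. by move=> a v w; rewrite /psi -[(0, _)]/(zpart _) !linearP. Qed.

HB.instance Definition _ := GRing.isLinear.Build k _ _ _ phi phi_is_linear.
HB.instance Definition _ := GRing.isLinear.Build k _ _ _ chi chi_is_linear.
HB.instance Definition _ := GRing.isLinear.Build k _ _ _ psi psi_is_linear.

Lemma f_wedge v w : f (0, wedge e v w) = (0, wedge e' (phi v) (phi w)).
Proof. exact: (f_br (in_n_vpart e v) (in_n_vpart e w)). Qed.

Lemma psi_wedge v w : psi (wedge e v w) = wedge e' (phi v) (phi w).
Proof. by rewrite /psi f_wedge. Qed.

Lemma chi_skew z : skew_on e z -> chi z = 0.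
Proof.
move=> zs; rewrite (skew_on_wedge_expand two_neq0 zs) linear_sum big1 // => pq _.
by rewrite linearZ /= /chi f_wedge scaler0.
Qed.

Lemma phi_surj w : exists v, phi v = w.
Proof.
have [x x_n fx] := f_surj (in_n_vpart e' w); exists x.1.
have x_split : x = (x.1, 0) + (0, x.2).
  by case: x {x_n fx} => v z; apply: injective_projections; rewrite /= ?addr0 ?add0r.
move/(congr1 fst): fx; rewrite {1}x_split linearD /=.
by rewrite -/(phi x.1) -/(chi x.2) chi_skew // addr0.
Qed.

Lemma derived_preimage y :
  skew_on e' y -> exists2 z, skew_on e z & f (0, z) = (0, y).
Proof.
move=> ys; have /fin_all_exists[u uP] : forall g, exists v, phi v = delta g.
  by move=> g; apply: phi_surj.
pose Z := \sum_(pq : S' * S') (y pq / 2%:R) *: wedge e (u pq.1) (u pq.2).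
exists Z; first by apply: skew_on_lincomb => pq; apply: skew_on_wedge.
transitivity
  (zpart (\sum_(pq : S' * S') (y pq / 2%:R) *: wedge e' (delta pq.1) (delta pq.2))).
  rewrite -[(0, Z)]/(zpart Z) !linear_sum; apply: eq_bigr => pq _.
  by rewrite !linearZ /= /zpart f_wedge !uP.
by rewrite -(skew_on_wedge_expand two_neq0 ys).
Qed.

Lemma phi_inj : injective phi.
Proof.
suff phi_eq0 v : phi v = 0 -> v = 0.
  by move=> v w vw; apply/eqP; rewrite -subr_eq0; apply/eqP/phi_eq0; rewrite linearB /= vw subrr.
move=> phiv0; have [z zs fz] := derived_preimage (f_n (in_n_vpart e v)).
have : f (v, 0) = f (0, z) by rewrite fz [LHS]surjective_pairing -/(phi v) phiv0.
by move/(f_inj (in_n_vpart e v) (zs : in_n e (0, z)))/(congr1 fst).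
Qed.

Definition phi_inv := ((linfun phi)^-1)%VF.

Lemma phiK : cancel phi phi_inv.
Proof.
have ker0 : lker (linfun phi) == 0%VS.
  by apply/lker0P => v w; rewrite !lfunE; apply: phi_inj.
by move=> v; rewrite -{1}(lfunE phi) lker0_lfunK.
Qed.

Lemma phi_invK : cancel phi_inv phi.
Proof. by move=> w; have [v <-] := phi_surj w; rewrite phiK. Qed.

Lemma card_vertices_eq : #|S| = #|S'|.
Proof.
apply/eqP; rewrite eqn_leq (leq_card_linear_inj phi_inj).
exact: (leq_card_linear_inj (can_inj phi_invK)).
Qed.

Lemma ad_rank_phi x : ad_rank e' (phi x) = ad_rank e x.
Proof.
have img : (linfun psi @: ad_image e x)%VS = ad_image e' (phi x).
  apply/eqP; rewrite eqEsubv; apply/andP; split; apply/subvP.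
    move=> _ /memv_imgP[_ /memv_imgP[v _ ->] ->].
    by rewrite !lfunE /= psi_wedge memv_ad_image.
  move=> _ /memv_imgP[w _ ->]; rewrite lfunE /= -[w]phi_invK -psi_wedge.
  by rewrite -(lfunE psi) memv_img ?memv_ad_image.
rewrite /ad_rank -img limg_dim_eq //; apply/eqP; rewrite -subv0.
apply/subvP=> _ /memv_capP[/memv_imgP[v _ ->]]; rewrite memv_ker !lfunE /= => /eqP psi0.
have : f (0, wedge e x v) = f 0 by rewrite f_wedge -psi_wedge psi0 linear0.
have x_v_n : in_n e (0, wedge e x v) := skew_on_wedge e_sym x v.
move/(f_inj x_v_n (@skew_on0 k S e : in_n e 0)).
by move/(congr1 snd) => /= ->; rewrite memv0.
Qed.

Lemma degree_le_of_phi_coef a g :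
  phi (delta a) g != 0 -> (degree e' g <= degree e a)%N.
Proof.
move=> nz; rewrite (leq_trans (degree_le_ad_rank e'_irr nz)) //.
by rewrite ad_rank_phi ad_rank_delta.
Qed.

Lemma degree_le_of_phi_inv_coef g a :
  phi_inv (delta g) a != 0 -> (degree e a <= degree e' g)%N.
Proof.
move=> nz; rewrite (leq_trans (degree_le_ad_rank e_irr nz)) //.
by rewrite -ad_rank_phi phi_invK ad_rank_delta.
Qed.

Lemma degree_matching : exists s : S' -> S,
  [/\ bijective s, forall g, phi (delta (s g)) g != 0
    & forall g, degree e' g = degree e (s g)].
Proof.
have [s [s_inj s_nz]] := linear_surj_transversal card_vertices_eq phi_surj.
have phi_inv_surj v : exists w, phi_inv w = v by exists (phi v); rewrite phiK.
have [t [t_inj t_nz]] := linear_surj_transversal (esym card_vertices_eq) phi_inv_surj.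
have s_bij : bijective s by apply: inj_card_bij; rewrite // card_vertices_eq.
have t_bij : bijective t by apply: inj_card_bij; rewrite // card_vertices_eq.
exists s; split=> //; apply: (eq_of_leq_bij s_bij t_bij) => [g | a].
  exact: degree_le_of_phi_coef (s_nz g).
exact: degree_le_of_phi_inv_coef (t_nz a).
Qed.

Lemma phi_delta_closed a g rho eps : degree e' g = degree e a ->
  phi (delta a) g != 0 -> phi (delta a) rho != 0 -> e' rho eps -> (eps == g) || e' g eps.
Proof.
move=> deg_ga ag arho rho_eps; apply/negPn/negP.
rewrite negb_or => /andP[eps_g g_eps].
have := degree_lt_ad_rank e'_irr ag arho eps_g g_eps rho_eps.
by rewrite ad_rank_phi deg_ga ltnNge ad_rank_delta.
Qed.

Lemma nonadjacent_lincomb_support a b g d :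
  ~~ e a b -> e' g d -> phi (delta a) g != 0 -> phi (delta b) d != 0 ->
  degree e' g = degree e a -> degree e' d = degree e b ->
  exists2 lam, lam != 0 & forall eps beta,
    phi (delta b - lam *: delta a) eps != 0 -> e' eps beta -> (beta != d) && e' g beta.
Proof.
move=> ab gd ya_g yb_d deg_ga deg_db.
set ya := phi (delta a) in ya_g *; set yb := phi (delta b) in yb_d *.
have ya_closed := phi_delta_closed deg_ga ya_g.
have yb_closed := phi_delta_closed deg_db yb_d.
have cross x : e' g x -> ya g * yb x = ya x * yb g.
  apply: wedge_eq0_cross; rewrite -psi_wedge wedge_delta_eq0 ?linear0 // => p pb.
  by rewrite deltaE; case: eqP => // pa; rewrite -pa pb in ab.
have /andP[ya_d yb_g] : (ya d != 0) && (yb g != 0).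
  by rewrite -negb_or -mulf_eq0 -cross // mulf_neq0.
(* [lam] makes z vanish at g, hence on N(g) by the cross relation. *)
exists (yb g / ya g) => [|eps beta]; first by rewrite mulf_neq0 ?invr_eq0.
rewrite linearB linearZ /= -/ya -/yb; set z := yb - _ => z_eps eps_beta.
have eps_out : ~~ ((eps == g) || e' g eps).
  apply: contra z_eps => /orP[/eqP-> | g_eps]; apply/eqP; rewrite !ffunE.
    by rewrite [_ *: _]divfK ?subrr.
  rewrite -[yb eps](mulKf ya_g) cross //.
  by change ((ya g)^-1 * (ya eps * yb g) - yb g / ya g * ya eps = 0); ring.
have g_beta : (beta == g) || e' g beta.
  have /orP[/ya_closed | /yb_closed] : (ya eps != 0) || (yb eps != 0).
  - apply: contraR z_eps; rewrite negb_or !negbK => /andP[/eqP ya0 /eqP yb0].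
    by rewrite !ffunE ya0 yb0 [_ *: 0]mulr0 subr0.
  - exact.
  move/(_ _ eps_beta)/orP=> [/eqP-> | /(ya_closed _ _ ya_d) //].
  by rewrite gd orbT.
case/orP: g_beta => [/eqP beta_g | ->].
  by rewrite -beta_g e'_sym eps_beta orbT in eps_out.
rewrite andbT; apply: contraNneq eps_out => beta_d.
by apply: ya_closed ya_d _; rewrite e'_sym -beta_d.
Qed.

Lemma degree_matching_hom (s : S' -> S) :
  injective s -> (forall g, phi (delta (s g)) g != 0) ->
  (forall g, degree e' g = degree e (s g)) -> forall g d, e' g d -> e (s g) (s d).
Proof.
move=> s_inj s_nz s_deg g d gd; apply/negPn/negP => ab.
have [lam lam_neq0 z_supp] :=
  nonadjacent_lincomb_support ab gd (s_nz g) (s_nz d) (s_deg g) (s_deg d).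
have sg_sd : s g != s d by apply: contraTneq gd => /s_inj->; rewrite e'_irr.
pose Q := [set beta | e' g beta] :\ d.
have x_sg : (delta (s d) - lam *: delta (s g)) (s g) != 0.
  by rewrite !ffunE eqxx eq_sym (negPf sg_sd) sub0r [_ *: _]mulr1 eq_sym oppr_eq0.
have rank_le : (ad_rank e (delta (s d) - lam *: delta (s g))%R <= #|Q|)%N.
  rewrite -ad_rank_phi; apply: ad_rank_le_card => beta beta_Q.
  apply: (wedge_delta_eq0 e'_sym) => p p_beta; apply/eqP.
  apply: contraNT beta_Q => z_p.
  by rewrite !inE; have /andP[-> ->] := z_supp _ _ z_p p_beta.
have := leq_trans (degree_le_ad_rank e_irr x_sg) rank_le.
by rewrite -s_deg /degree (cardsD1 d [set b | e' g b]) inE gd add1n ltnn.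
Qed.

Lemma graph_iso_of_lie_iso : graph_iso e e'.
Proof.
have [s [s_bij s_nz s_deg]] := degree_matching.
have s_hom := degree_matching_hom (bij_inj s_bij) s_nz s_deg.
have s_refl := hom_degree_reflect (bij_inj s_bij) s_hom s_deg.
have [s' sK s'K] := s_bij; exists s'; split; first by exists s.
by move=> a b; rewrite -s_refl !s'K.
Qed.

End LieIsomorphism.

Theorem theorem1p1 (k : fieldType) (S S' : finType) (e : rel S) (e' : rel S') :
  2%N \notin [pchar k]%R ->
  simple_graph e -> simple_graph e' ->
  n_lie_iso k e e' -> graph_iso e e'.
Proof.
move=> char2 [e_irr e_sym] [e'_irr e'_sym] [f [f_n f_inj f_surj f_br]].
apply: (graph_iso_of_lie_iso e_irr e_sym e'_irr e'_sym _ f_n f_inj f_surj f_br).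
by apply: contra char2 => two0; rewrite inE /= two0.
Qed.
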